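(* Let $\varepsilon\in\{\pm1\}$ and let $(c_1,\dots,c_m)\in\mathbb{Z}^m$ be an $\varepsilon$-cycle. Indices are read cyclically modulo $m$. Then at least one of the following holds: (0) $m=2$ and $(c_1,c_2)=(0,0)$; (1) there is $k$ with $c_k=1$ such that $(c_1,\dots,c_{k-2},c_{k-1}-1,c_{k+1}-1,c_{k+2},\dots,c_m)$ is an $\varepsilon$-cycle of length $m-1$; (2) there is $k$ with $c_k=0$ such that $(c_1,\dots,c_{k-2},c_{k-1}+c_{k+1},c_{k+2},\dots,c_m)$ is a $(-\varepsilon)$-cycle of length $m-2$; (3) there is $k$ with $c_k=-1$ such that $(c_1,\dots,c_{k-2},c_{k-1}+1,c_{k+1}+1,c_{k+2},\dots,c_m)$ is a $(-\varepsilon)$-cycle of length $m-1$.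
   Context: $\eta(c)=\begin{pmatrix}c&-1\\1&0\end{pmatrix}$. For $\varepsilon\in\{\pm1\}$, an $\varepsilon$-cycle is a sequence $(c_1,\dots,c_m)\in\mathbb{Z}^m$ with $\eta(c_1)\cdots\eta(c_m)=\varepsilon I$. *)

From HB Require Import structures.
From mathcomp Require Import all_boot all_order all_algebra.
Set Implicit Arguments. Unset Strict Implicit. Unset Printing Implicit Defensive.
Import Order.TTheory GRing.Theory Num.Theory.
Local Open Scope ring_scope.

Definition eta (c : int) : 'M[int]_2 :=
  \matrix_(i < 2, j < 2)
    if (i == 0 :> nat) then (if (j == 0 :> nat) then c else -1)
    else (if (j == 0 :> nat) then 1 else 0).

Definition eta_prod (s : seq int) : 'M[int]_2 :=
  foldr (fun c M => eta c *m M) 1%:M s.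

Definition is_cycle (e : int) (s : seq int) : Prop := eta_prod s = e%:M.

(* Cyclic contraction at (0-indexed) position k, for size s >= 3:
   replaces (c_{k-1}, c_k, c_{k+1}) (indices mod m) by (f c_{k-1}, g c_{k+1}),
   keeping all other entries in their cyclic order, and for 1 <= k <= m-2
   (0-indexed) in exactly the literal order of the paper
   (c_0..c_{k-2}, f c_{k-1}, g c_{k+1}, c_{k+2}..c_{m-1}). *)
Definition contract_pair (f g : int -> int) (s : seq int) (k : nat) : seq int :=
  let m := size s in
  let r := ((k + m - 1) %% m)%N in
  match rot r s with
  | a :: _ :: b :: rest => rotr r (f a :: g b :: rest)
  | _ => [::]
  end.

Definition contract_sum (s : seq int) (k : nat) : seq int :=
  let m := size s in
  let r := ((k + m - 1) %% m)%N in
  match rot r s with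
  | a :: _ :: b :: rest => rotr r ((a + b) :: rest)
  | _ => [::]
  end.

(* A cycle stays a cycle under rotation, because A B = e I with e a unit forces
   B A = e I.  Every cycle of length >= 1 has an entry c with |c| <= 1:
   otherwise the first column (x, y) of eta(c_1)...eta(c_m) satisfies |y| < |x|
   and |x| grows strictly with each factor, so it cannot be (e, 0).  Rotating
   such an entry into the second position, one of the identities
     eta(a) eta(1) eta(b)  =   eta(a - 1) eta(b - 1),
     eta(a) eta(0) eta(b)  = - eta(a + b),
     eta(a) eta(-1) eta(b) = - eta(a + 1) eta(b + 1)
   contracts it; cycles of length < 3 are checked by hand. *)

From Pilot Require Import Defs.
From HB Require Import structures.
From mathcomp Require Import all_boot all_order all_algebra.
From mathcomp Require Import zify ring.
Set Implicit Arguments.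
Unset Strict Implicit.
Unset Printing Implicit Defensive.
Import Order.TTheory GRing.Theory Num.Theory.
Local Open Scope ring_scope.

Lemma mulmx_scalar_comm (R : comUnitRingType) n (A B : 'M[R]_n) (e : R) :
  e \is a GRing.unit -> A *m B = e%:M -> B *m A = e%:M.
Proof.
move=> ue AB; have: (e^-1 *: A) *m B = 1%:M.
  by rewrite -scalemxAl AB scale_scalar_mx mulVr.
move/mulmx1C => /(congr1 ( *:%R e)).
by rewrite -scalemxAr scalerA divrr // scale1r scale_scalar_mx mulr1.
Qed.

Lemma eta_prod_cat (s1 s2 : seq int) :
  eta_prod (s1 ++ s2) = eta_prod s1 *m eta_prod s2.
Proof. by elim: s1 => [|c s1 IH] /=; rewrite ?mul1mx // -mulmxA -IH. Qed.

Lemma sign_unit (e : int) : e = 1 \/ e = -1 -> e \is a GRing.unit.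
Proof. by case=> ->; rewrite ?unitrN unitr1. Qed.

Lemma cycle_rot (e : int) s r :
  e \is a GRing.unit -> is_cycle e s -> is_cycle e (rot r s).
Proof.
move=> ue; rewrite /is_cycle -{1}(cat_take_drop r s) /rot !eta_prod_cat.
exact: mulmx_scalar_comm.
Qed.

Lemma cycle_rotr (e : int) s r :
  e \is a GRing.unit -> is_cycle e s -> is_cycle e (rotr r s).
Proof. exact: cycle_rot. Qed.

Ltac eta_mx_ring :=
  apply/matrixP; case=> [[|[|//]] ?]; case=> [[|[|//]] ?];
  rewrite !(mxE, big_ord_recr, big_ord0) /=; ring.

Lemma eta_mul_eta1 a b :
  Defs.eta a *m Defs.eta 1 *m Defs.eta b = Defs.eta (a - 1) *m Defs.eta (b - 1).
Proof. eta_mx_ring. Qed.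

Lemma eta_mul_eta0 a b :
  Defs.eta a *m Defs.eta 0 *m Defs.eta b = - Defs.eta (a + b).
Proof. eta_mx_ring. Qed.

Lemma eta_mul_etaN1 a b :
  Defs.eta a *m Defs.eta (-1) *m Defs.eta b =
  - (Defs.eta (a + 1) *m Defs.eta (b + 1)).
Proof. eta_mx_ring. Qed.

Lemma cycle_contract1 (e : int) a b rest :
  is_cycle e [:: a, 1, b & rest] -> is_cycle e [:: a - 1, b - 1 & rest].
Proof. by rewrite /is_cycle /= !mulmxA eta_mul_eta1. Qed.

Lemma cycle_contract0 (e : int) a b rest :
  is_cycle e [:: a, 0, b & rest] -> is_cycle (- e) (a + b :: rest).
Proof.
rewrite /is_cycle /= !mulmxA eta_mul_eta0 mulNmx => /eqP.
by rewrite eqr_oppLR raddfN => /eqP.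
Qed.

Lemma cycle_contractN1 (e : int) a b rest :
  is_cycle e [:: a, -1, b & rest] -> is_cycle (- e) [:: a + 1, b + 1 & rest].
Proof.
rewrite /is_cycle /= !mulmxA eta_mul_etaN1 mulNmx => /eqP.
by rewrite eqr_oppLR raddfN => /eqP.
Qed.

Lemma eta_mul_col (a : int) (M : 'M[int]_2) :
  (Defs.eta a *m M) ord0 ord0 = a * M ord0 ord0 - M ord_max ord0 /\
  (Defs.eta a *m M) ord_max ord0 = M ord0 ord0.
Proof.
rewrite !mxE !big_ord_recl !big_ord0 !mxE /=.
have -> : lift ord0 ord0 = ord_max :> 'I_2 by apply/val_inj.
by split; ring.
Qed.

Lemma eta_prod_col_growth (s : seq int) : {in s, forall c, 2 <= `|c|} ->
  `|eta_prod s ord_max ord0| < `|eta_prod s ord0 ord0| /\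
  (size s)%:Z < `|eta_prod s ord0 ord0|.
Proof.
elim: s => [|c s IH] s_big; first by rewrite /= !mxE.
have [lt_yx lt_sx] := IH (fun x xs => s_big x (mem_behead (s := c :: s) xs)).
have c_big := s_big c (mem_head _ _).
have [-> ->] := eta_mul_col c (eta_prod s).
set x := eta_prod s ord0 ord0 in lt_yx lt_sx *.
set y := eta_prod s _ _ in lt_yx lt_sx *.
have tri : `|c * x| - `|y| <= `|c * x - y| by rewrite -(normrN y) lerB_normD.
have cx : 2 * `|x| <= `|c * x| by rewrite normrM ler_wpM2r.
rewrite /=; split; lia.
Qed.

Lemma cycle_has_small_entry (e : int) s : e = 1 \/ e = -1 -> (0 < size s)%N ->
  is_cycle e s -> exists2 c, c \in s & `|c| < 2.
Proof.
move=> e_sign s_gt0 s_cyc; apply/hasP; apply: contraT => /hasPn s_big.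
case: (@eta_prod_col_growth s) => [c /s_big|_]; first by rewrite -leNgt.
by rewrite s_cyc mxE /=; case: e_sign => ->; lia.
Qed.

Lemma nth_rot (T : Type) (x0 : T) (s : seq T) n i :
  (n <= size s)%N -> (i < size s)%N ->
  nth x0 (rot n s) i = nth x0 s ((n + i) %% size s).
Proof.
move=> n_le i_lt; rewrite /rot nth_cat size_drop nth_drop.
case: ltnP => [i_lt' | i_ge]; first by rewrite modn_small //; lia.
have -> : (n + i = (i - (size s - n)) + size s)%N by lia.
by rewrite modnDr modn_small ?nth_take //; lia.
Qed.

Lemma rot_to_window (s : seq int) k : (3 <= size s)%N -> (k < size s)%N ->
  exists a b rest,
    rot ((k + size s - 1) %% size s) s = [:: a, nth 0 s k, b & rest].
Proof.
move=> s_ge3 k_lt; set r := ((k + size s - 1) %% size s)%N.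
have r_lt : (r < size s)%N by rewrite ltn_mod; lia.
have mid : nth 0 (rot r s) 1 = nth 0 s k.
  rewrite nth_rot ?(ltnW r_lt) //; last by apply: leq_trans s_ge3.
  rewrite /r modnDml (_ : _ - 1 + 1 = k + size s)%N; last by lia.
  by rewrite modnDr modn_small.
move: mid (size_rot r s); case: (rot r s) => [|a [|x [|b rest]]] //=; try lia.
by move=> -> _; exists a, b, rest.
Qed.

Section ContractionAtPosition.

Variables (e e' : int) (s : seq int) (k : nat).
Hypothesis s_cyc : is_cycle e s.
Hypotheses (e_unit : e \is a GRing.unit) (e'_unit : e' \is a GRing.unit).
Hypotheses (s_ge3 : (3 <= size s)%N) (k_lt : (k < size s)%N).

Lemma cycle_contract_pair (f g : int -> int) :
  (forall a b rest, is_cycle e [:: a, nth 0 s k, b & rest] ->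
     is_cycle e' [:: f a, g b & rest]) ->
  is_cycle e' (contract_pair f g s k).
Proof.
move=> local; have [a [b [rest window]]] := rot_to_window s_ge3 k_lt.
rewrite /contract_pair window; apply/cycle_rotr/local => //.
by rewrite -window; apply: cycle_rot.
Qed.

Lemma cycle_contract_sum :
  (forall a b rest, is_cycle e [:: a, nth 0 s k, b & rest] ->
     is_cycle e' (a + b :: rest)) ->
  is_cycle e' (contract_sum s k).
Proof.
move=> local; have [a [b [rest window]]] := rot_to_window s_ge3 k_lt.
rewrite /contract_sum window; apply/cycle_rotr/local => //.
by rewrite -window; apply: cycle_rot.
Qed.

End ContractionAtPosition.

Lemma short_cycle (e : int) s : (0 < size s)%N -> (size s < 3)%N ->
  is_cycle e s -> s = [:: 0; 0].
Proof.
case: s => [|a [|b [|c s]]] //= _ _ /matrixP cyc;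
  have := cyc ord0 ord_max; have := cyc ord_max ord0;
  rewrite /eta_prod /= ?mulmx1 !(mxE, big_ord_recr, big_ord0) /=.
- by rewrite mulr0n.
- by rewrite !mulr0n => b0 a0; congr [:: _; _]; lia.
Qed.

Theorem theorem6p2 (e : int) (s : seq int) :
  (e = 1 \/ e = -1) ->
  (0 < size s)%N ->
  is_cycle e s ->
  (size s = 2%N /\ s = [:: 0; 0])
  \/ ((3 <= size s)%N /\ exists k : nat, (k < size s)%N /\ nth 0 s k = 1 /\
        is_cycle e (contract_pair (fun x => x - 1) (fun x => x - 1) s k))
  \/ ((3 <= size s)%N /\ exists k : nat, (k < size s)%N /\ nth 0 s k = 0 /\
        is_cycle (- e) (contract_sum s k))
  \/ ((3 <= size s)%N /\ exists k : nat, (k < size s)%N /\ nth 0 s k = -1 /\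
        is_cycle (- e) (contract_pair (fun x => x + 1) (fun x => x + 1) s k)).
Proof.
move=> e_sign s_gt0 s_cyc.
have [s_ge3|s_lt3] := leqP 3 (size s); last first.
  by left; rewrite (short_cycle s_gt0 s_lt3 s_cyc).
have e_unit := sign_unit e_sign.
have Ne_unit : - e \is a GRing.unit by rewrite unitrN.
have [c cs c_small] := cycle_has_small_entry e_sign s_gt0 s_cyc.
have k_lt : (index c s < size s)%N by rewrite index_mem.
have sk := nth_index 0 cs; set k := index c s in k_lt sk.
have : c = 1 \/ c = 0 \/ c = -1 by lia.
case=> [c1 | [c0 | cN1]].
- right; left; split => //; exists k; rewrite sk c1; do !split => //.
  apply: (cycle_contract_pair s_cyc) => // a b rest.
  by rewrite sk c1; exact: cycle_contract1.
- right; right; left; split => //; exists k; rewrite sk c0; do !split => //.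
  apply: (cycle_contract_sum s_cyc) => // a b rest.
  by rewrite sk c0; exact: cycle_contract0.
- right; right; right; split => //; exists k; rewrite sk cN1; do !split => //.
  apply: (cycle_contract_pair s_cyc) => // a b rest.
  by rewrite sk cN1; exact: cycle_contractN1.
Qed.
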